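(* Let $C$ be a binary linear self-dual code of length $n$, let $i\in\{1,\dots,n\}$ be a coordinate position, and for $\delta\in\{0,1\}$ and $0\le k\le n$ let $$A_{k,\delta}=\left|\{v\in C : wt(v)=k,\ v[i]=\delta\}\right|.$$ Let $A_k$ be the number of codewords of $C$ of Hamming weight $k$ and $\rho=\sqrt2-1$. Then $$\sum_{k=0}^{n}A_{k,1}\rho^{k-1}=\sum_{k=0}^{n}A_{k,0}\rho^{k+1}\qquad\text{and}\qquad \sum_{k=0}^{n}A_{k,1}\rho^{k-1}=\frac{1+\rho}{4}\sum_{k=0}^{n}A_k\rho^{k}.$$ In particular, $\sum_{k=0}^{n}A_{k,1}\rho^{k-1}$ does not depend on the choice of the coordinate $i$.
   Context: A binary linear self-dual code $C$ of length $n$ is a linear subspace of $F^n$, $F=\{0,1\}$ the binary field, of dimension $n/2$ equal to its orthogonal complement under the standard dot product. $wt(v)$ denotes Hamming weight and $v[i]$ the $i$-th coordinate of $v$. *)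

From HB Require Import structures.
From mathcomp Require Import all_boot all_order all_algebra.
Set Implicit Arguments. Unset Strict Implicit. Unset Printing Implicit Defensive.
Import Order.TTheory GRing.Theory Num.Theory.
Local Open Scope ring_scope.

Notation bvec n := 'rV['F_2]_n.

Definition dotb (n : nat) (u v : bvec n) : 'F_2 := (u *m v^T) 0 0.

Definition wt (n : nat) (v : bvec n) : nat := #|[set j : 'I_n | v 0 j != 0]|.

Definition dual_code (n : nat) (C : {vspace bvec n}) : {set bvec n} :=
  [set v : bvec n | [forall u : bvec n, (u \in C) ==> (dotb u v == 0)]].

Definition self_dual (n : nat) (C : {vspace bvec n}) : Prop :=
  (\dim C = n./2)%N /\ forall v : bvec n, (v \in C) = (v \in dual_code C).

Definition A_w (n : nat) (C : {vspace bvec n}) (k : nat) : nat :=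
  #|[set v : bvec n | (v \in C) && (wt v == k)]|.

Definition A_wc (n : nat) (C : {vspace bvec n}) (i : 'I_n) (k : nat) (d : 'F_2) : nat :=
  #|[set v : bvec n | [&& v \in C, wt v == k & v 0 i == d]]|.

From HB Require Import structures.
From mathcomp Require Import all_boot all_order all_algebra.
From mathcomp Require Import lra ring.
Set Implicit Arguments. Unset Strict Implicit. Unset Printing Implicit Defensive.
Import Order.TTheory GRing.Theory Num.Theory.
Local Open Scope ring_scope.

(* For rho = sqrt 2 - 1 the product weight x |-> rho ^ wt x is an eigenvector
   of the Hadamard transform on F_2^n, with eigenvalue (1 + rho)^n, because
   1 - rho = rho (1 + rho).  Poisson summation over a self-dual code C, applied
   to this weight and to its twist by the character x |-> (-1)^(x_i), yields
   Z_1 = rho^2 Z_0, where Z_d sums rho ^ wt v over the codewords v with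
   v_i = d.  Both sides of the first identity equal rho Z_0, and
   Z_0 + Z_1 = (1 + rho^2) Z_0 = 4 rho / (1 + rho) Z_0 gives the second. *)

Lemma F2_cases (b : 'F_2) : b = 0 \/ b = 1.
Proof. by case: b => [[|[|b]] Hb] //; [left|right]; apply/val_inj. Qed.

Lemma F2_add11 : 1 + 1 = 0 :> 'F_2.
Proof. exact/val_inj. Qed.

Lemma dotbDl n (u v x : bvec n) : dotb (u + v) x = dotb u x + dotb v x.
Proof. by rewrite /dotb mulmxDl mxE. Qed.

Lemma dotb_delta n (i : 'I_n) (x : bvec n) : dotb (delta_mx 0 i) x = x 0 i.
Proof. by rewrite /dotb -rowE !mxE. Qed.

Section HadamardTransform.
Variable R : numDomainType.

Definition chi (b : 'F_2) : R := if b == 0 then 1 else -1.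

Lemma chi0 : chi 0 = 1. Proof. by rewrite /chi eqxx. Qed.

Lemma chi1 : chi 1 = -1. Proof. by rewrite /chi oner_eq0. Qed.

Lemma chiD a b : chi (a + b) = chi a * chi b.
Proof.
case: (F2_cases a) => ->; case: (F2_cases b) => ->;
  by rewrite ?add0r ?addr0 ?F2_add11 chi0 ?chi1 ?mulN1r ?mul1r ?opprK.
Qed.

Lemma chi_dotb n (u x : bvec n) : chi (dotb u x) = \prod_j chi (u 0 j * x 0 j).
Proof.
rewrite /dotb mxE (big_morph chi chiD chi0).
by apply: eq_bigr => j _; rewrite mxE.
Qed.

Lemma sum_F2 (G : 'F_2 -> R) : \sum_(b : 'F_2) G b = G 0 + G 1.
Proof.
rewrite (bigD1 0) //= (bigD1 1) //= big1 ?addr0 // => b /andP[b_neq0 b_neq1].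
by case: (F2_cases b) b_neq0 b_neq1 => ->; rewrite eqxx.
Qed.

Lemma sum_rV_prod n (G : 'I_n -> 'F_2 -> R) :
  \sum_(x : bvec n) \prod_j G j (x 0 j) = \prod_j \sum_(b : 'F_2) G j b.
Proof.
rewrite bigA_distr_bigA /= (reindex (fun x : bvec n => [ffun j => x 0 j])) /=.
  by apply: eq_bigr => x _; apply: eq_bigr => j _; rewrite ffunE.
apply: onW_bij; exists (fun f : {ffun 'I_n -> 'F_2} => \row_j f j).
  by move=> x; apply/rowP => j; rewrite !mxE ffunE.
by move=> f; apply/ffunP => j; rewrite ffunE mxE.
Qed.

Definition pweight (a b : R) n (x : bvec n) : R :=
  \prod_j (if x 0 j == 0 then a else b).

Lemma hadamard_pweight (a b : R) n (u : bvec n) :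
  \sum_x chi (dotb u x) * pweight a b x = pweight (a + b) (a - b) u.
Proof.
under eq_bigr => x _ do rewrite chi_dotb /pweight -big_split /=.
rewrite (sum_rV_prod (fun j c => chi (u 0 j * c) * (if c == 0 then a else b))).
apply: eq_bigr => j _.
rewrite sum_F2 mulr0 mulr1 chi0 eqxx oner_eq0 !mul1r.
by case: (F2_cases (u 0 j)) => ->; rewrite ?chi0 ?chi1 ?eqxx ?oner_eq0 ?mul1r ?mulN1r.
Qed.

Lemma pweightZ (c a b : R) n (x : bvec n) :
  pweight (c * a) (c * b) x = c ^+ n * pweight a b x.
Proof.
rewrite /pweight -[in c ^+ n](card_ord n) -prodr_const -big_split /=.
by apply: eq_bigr => j _; case: ifP.
Qed.

Lemma pweight1 (b : R) n (x : bvec n) : pweight 1 b x = b ^+ wt x.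
Proof.
rewrite /pweight /wt -prodr_const (bigID (fun j => x 0 j == 0)) /=.
rewrite big1 ?mul1r => [|j ->] //.
by apply: eq_big => [j|j /negbTE ->]; rewrite ?inE.
Qed.

Lemma sum_wt_card n (P : pred (bvec n)) (F : nat -> R) :
  \sum_(0 <= k < n.+1) #|[set v | P v && (wt v == k)]|%:R * F k =
  \sum_(v | P v) F (wt v).
Proof.
have wt_lt (v : bvec n) : (wt v < n.+1)%N.
  by rewrite ltnS /wt (leq_trans (max_card _)) // card_ord.
have card_sum k : #|[set v | P v && (wt v == k)]|%:R * F k =
    \sum_(v | P v && (wt v == k)) F k :> R.
  by rewrite -sum1_card natr_sum mulr_suml; apply: eq_big => [v|v _]; rewrite ?inE ?mul1r.
rewrite big_mkord; under eq_bigr => k _ do rewrite card_sum.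
rewrite (exchange_big_dep P) /= => [|k v _ /andP[] //].
apply: eq_bigr => v Pv; rewrite (big_pred1 (Ordinal (wt_lt v))) // => k.
by rewrite Pv; apply/eqP/eqP => [wt_k|->] //; apply: val_inj.
Qed.

Lemma sum_code_coord n (C : {vspace bvec n}) (i : 'I_n) (g : bvec n -> R) :
  \sum_(u | u \in C) g u =
  \sum_(u | (u \in C) && (u 0 i == 0)) g u + \sum_(u | (u \in C) && (u 0 i == 1)) g u.
Proof.
rewrite (bigID (fun u : bvec n => u 0 i == 0)) /=; congr (_ + _).
apply: eq_bigl => u; congr (_ && _).
by case: (F2_cases (u 0 i)) => ->; rewrite ?eqxx ?oner_eq0 // eq_sym oner_eq0.
Qed.

Lemma sum_A_wc n (C : {vspace bvec n}) (i : 'I_n) (d : 'F_2) (F : nat -> R) :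
  \sum_(0 <= k < n.+1) (A_wc C i k d)%:R * F k =
  \sum_(u | (u \in C) && (u 0 i == d)) F (wt u).
Proof.
rewrite -sum_wt_card; apply: eq_bigr => k _; congr (_%:R * _).
by apply: eq_card => v; rewrite !inE andbA andbAC.
Qed.

Lemma sum_A_w n (C : {vspace bvec n}) (F : nat -> R) :
  \sum_(0 <= k < n.+1) (A_w C k)%:R * F k = \sum_(u | u \in C) F (wt u).
Proof. exact: sum_wt_card (fun v => v \in C) F. Qed.

Section SelfDualCode.
Variables (n : nat) (C : {vspace bvec n}).
Hypothesis C_self_dual : self_dual C.

Lemma sum_chi_self_dual (x : bvec n) :
  \sum_(u | u \in C) chi (dotb u x) = if x \in C then \sum_(u | u \in C) 1 else 0.
Proof.
have [x_in_C|x_notin_C] := boolP (x \in C).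
  apply: eq_bigr => u u_in_C; move: x_in_C.
  by rewrite C_self_dual.2 inE => /forallP /(_ u) /implyP /(_ u_in_C) /eqP ->.
move: x_notin_C; rewrite C_self_dual.2 inE negb_forall => /existsP [u0].
rewrite negb_imply => /andP [u0_in_C dot_neq0].
have dot_u0 : dotb u0 x = 1 by case: (F2_cases (dotb u0 x)) dot_neq0 => ->.
set s := \sum_(u | u \in C) _.
(* Translating by u0 permutes C and flips the sign of every term. *)
have s_opp : s = - s.
  rewrite {1}/s (reindex_inj (addIr u0)) /= -sumrN.
  apply: eq_big => [u|u _]; first by rewrite rpredDr.
  by rewrite dotbDl chiD dot_u0 chi1 mulrN1.
have : s *+ 2 == 0 by rewrite mulr2n {2}s_opp subrr.
by rewrite mulrn_eq0 => /eqP.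
Qed.

Lemma poisson_self_dual (f : bvec n -> R) :
  \sum_(u | u \in C) \sum_x chi (dotb u x) * f x =
  (\sum_(u | u \in C) 1) * \sum_(x | x \in C) f x.
Proof.
rewrite exchange_big /= mulr_sumr.
under eq_bigr => x _ do rewrite -mulr_suml sum_chi_self_dual.
rewrite (bigID (fun x => x \in C)) /= [X in _ + X]big1 ?addr0.
  by apply: eq_bigr => x ->.
by move=> x /negbTE ->; rewrite mul0r.
Qed.

End SelfDualCode.
End HadamardTransform.

Arguments chi {R}.

Section SqrtTwoWeight.
Variable R : rcfType.

Definition rho : R := Num.sqrt 2 - 1.

Lemma sqrt2_sqr : Num.sqrt (2 : R) ^+ 2 = 2.
Proof. by rewrite sqr_sqrtr // ler0n. Qed.

Lemma rho_gt0 : 0 < rho.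
Proof. have := sqrt2_sqr; have := sqrtr_ge0 (2 : R); rewrite /rho; nra. Qed.

Lemma rho_neq0 : rho != 0. Proof. exact: lt0r_neq0 rho_gt0. Qed.

Lemma rho_sqr : rho ^+ 2 = 1 - 2 * rho.
Proof. have := sqrt2_sqr; rewrite /rho; nra. Qed.

Lemma one_add_rho_neq0 : 1 + rho != 0.
Proof. by rewrite gt_eqF // ltr_wpDr ?ltr01 // ltW ?rho_gt0. Qed.

Lemma one_sub_rho : 1 - rho = (1 + rho) * rho.
Proof. by have := rho_sqr; nra. Qed.

Local Notation W := (@pweight R 1 rho _).

Lemma hadamard_W n (u : bvec n) :
  \sum_x chi (dotb u x) * W x = (1 + rho) ^+ n * W u.
Proof. by rewrite hadamard_pweight one_sub_rho -pweightZ mulr1. Qed.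

Lemma W_ge0 n (x : bvec n) : 0 <= W x.
Proof. by rewrite pweight1 exprn_ge0 // ltW ?rho_gt0. Qed.

Lemma W0 n : W (0 : bvec n) = 1.
Proof. by rewrite /pweight big1 // => j _; rewrite mxE eqxx. Qed.

Lemma W_add_delta n (i : 'I_n) (u : bvec n) :
  W (u + delta_mx 0 i) = if u 0 i == 0 then rho * W u else W u / rho.
Proof.
rewrite /pweight (bigD1 i) //= [in RHS](bigD1 i) //=.
under eq_bigr => j j_neq_i do rewrite !mxE (negbTE j_neq_i) addr0.
rewrite !mxE !eqxx /= mulr1n.
case: (F2_cases (u 0 i)) => ->; rewrite ?add0r ?F2_add11 ?eqxx ?oner_eq0 ?mul1r //.
by rewrite mulrAC divff ?rho_neq0 ?mul1r.
Qed.

Section SelfDualCode.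
Variables (n : nat) (C : {vspace bvec n}) (i : 'I_n).
Hypothesis C_self_dual : self_dual C.

Let Z d := \sum_(u | (u \in C) && (u 0 i == d)) W u.

Lemma sum_self_dual_1 : \sum_(u | u \in C) 1 = (1 + rho) ^+ n :> R.
Proof.
have := poisson_self_dual C_self_dual W.
under eq_bigr => u _ do rewrite hadamard_W.
rewrite -mulr_sumr mulrC => eqZ.
have Z_gt0 : 0 < \sum_(u | u \in C) W u.
  rewrite (bigD1 0) ?rpred0 //= W0 ltr_pwDl ?ltr01 //.
  by apply: sumr_ge0 => x _; exact: W_ge0.
by apply: (mulIf (lt0r_neq0 Z_gt0)); rewrite -eqZ mulrC.
Qed.

Lemma sum_W_coord1 : Z 1 = rho ^+ 2 * Z 0.
Proof.
have := poisson_self_dual C_self_dual (fun x => chi (x 0 i) * W x).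
under eq_bigr => u _.
  under eq_bigr => x _ do rewrite mulrA -dotb_delta -chiD -dotbDl.
  rewrite hadamard_W; over.
rewrite -mulr_sumr sum_self_dual_1 => /(mulfI (expf_neq0 _ one_add_rho_neq0)).
rewrite !(sum_code_coord C i).
have shift0 : \sum_(u | (u \in C) && (u 0 i == 0)) W (u + delta_mx 0 i) = rho * Z 0.
  by rewrite /Z mulr_sumr; apply: eq_bigr => u /andP[_ u_i0]; rewrite W_add_delta u_i0.
have shift1 : \sum_(u | (u \in C) && (u 0 i == 1)) W (u + delta_mx 0 i) = Z 1 / rho.
  rewrite /Z mulr_suml; apply: eq_bigr => u /andP[_ /eqP u_i1].
  by rewrite W_add_delta u_i1 oner_eq0.
have twist0 : \sum_(u | (u \in C) && (u 0 i == 0)) chi (u 0 i) * W u = Z 0.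
  by apply: eq_bigr => u /andP[_ /eqP ->]; rewrite chi0 mul1r.
have twist1 : \sum_(u | (u \in C) && (u 0 i == 1)) chi (u 0 i) * W u = - Z 1.
  by rewrite -sumrN; apply: eq_bigr => u /andP[_ /eqP ->]; rewrite chi1 mulN1r.
rewrite shift0 shift1 twist0 twist1 => eqZ.
have eqZ' : rho ^+ 2 * Z 0 + Z 1 = rho * Z 0 - rho * Z 1.
  by rewrite -mulrBr -eqZ mulrDr mulrA -expr2 mulrCA divff ?rho_neq0 ?mulr1.
apply: (mulIf one_add_rho_neq0).
have -> : Z 1 * (1 + rho) = rho * (1 - rho) * Z 0 by lra.
by rewrite one_sub_rho; ring.
Qed.

Lemma sum_A_wc1 :
  \sum_(0 <= k < n.+1) (A_wc C i k 1)%:R * rho ^ (k%:Z - 1) = rho * Z 0.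
Proof.
rewrite sum_A_wc.
under eq_bigr => u _ do rewrite expfzDr ?rho_neq0 // -exprnP exprN1 -pweight1.
by rewrite -mulr_suml -/(Z 1) sum_W_coord1 expr2 -mulrA mulrC mulKf ?rho_neq0.
Qed.

Lemma sum_A_wc0 :
  \sum_(0 <= k < n.+1) (A_wc C i k 0)%:R * rho ^ (k%:Z + 1) = rho * Z 0.
Proof.
rewrite sum_A_wc /Z mulr_sumr; apply: eq_bigr => u _.
by rewrite expfzDr ?rho_neq0 // -exprnP expr1z -pweight1 mulrC.
Qed.

Lemma sum_A_w_rho :
  \sum_(0 <= k < n.+1) (A_w C k)%:R * rho ^+ k = (1 + rho ^+ 2) * Z 0.
Proof.
rewrite sum_A_w (sum_code_coord C i).
under eq_bigr => u _ do rewrite -pweight1.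
under [X in _ + X]eq_bigr => u _ do rewrite -pweight1.
by rewrite -/(Z 0) -/(Z 1) sum_W_coord1 mulrDl mul1r.
Qed.

Lemma sum_A_wc1_weight_enumerator :
  \sum_(0 <= k < n.+1) (A_wc C i k 1)%:R * rho ^ (k%:Z - 1) =
  (1 + rho) / 4 * \sum_(0 <= k < n.+1) (A_w C k)%:R * rho ^+ k.
Proof.
have coef : (1 + rho) / 4 * (1 + rho ^+ 2) = rho by have := rho_sqr; nra.
by rewrite sum_A_wc1 sum_A_w_rho mulrA coef.
Qed.

End SelfDualCode.
End SqrtTwoWeight.

Theorem theorem7 (R : rcfType) (n : nat) (C : {vspace 'rV['F_2]_n})
    (hC : self_dual C) (i : 'I_n) :
  let rho : R := Num.sqrt 2 - 1 in
  let S := fun j : 'I_n =>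
    \sum_(0 <= k < n.+1) (A_wc C j k 1)%:R * rho ^ (k%:Z - 1) in
  [/\ S i = \sum_(0 <= k < n.+1) (A_wc C i k 0)%:R * rho ^ (k%:Z + 1),
      S i = (1 + rho) / 4 * \sum_(0 <= k < n.+1) (A_w C k)%:R * rho ^+ k
    & forall j : 'I_n, S j = S i].
Proof.
move=> r S; rewrite /S /r -/(rho R); split.
- by rewrite sum_A_wc1 // sum_A_wc0.
- exact: sum_A_wc1_weight_enumerator hC.
- by move=> j; rewrite !sum_A_wc1_weight_enumerator.
Qed.
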